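(* Let $f:\mathbb{R}^n\times\mathbb{R}^p\to[-\infty,\infty]$ be a proper nearly convex function and $F:\mathbb{R}^n\rightrightarrows\mathbb{R}^p$ a nearly convex set-valued mapping such that $\operatorname{ri}(\operatorname{dom} f)\cap\operatorname{ri}(\operatorname{gph} F)\neq\emptyset$. Then the optimal value function $\mu(x)=\inf\{f(x,y): y\in F(x)\}$, $x\in\mathbb{R}^n$ (with $\inf\emptyset=\infty$), is nearly convex.
   Context: A set $\Omega\subset\mathbb{R}^k$ is nearly convex if there is a convex set $C$ with $C\subset\Omega\subset\overline{C}$. For an arbitrary set $\Omega$, $\operatorname{ri}\Omega=\{a\in\Omega:\exists\delta>0,\ B(a;\delta)\cap\operatorname{aff}\Omega\subset\Omega\}$. For $f:\mathbb{R}^k\to[-\infty,\infty]$: $\operatorname{dom} f=\{x:f(x)<\infty\}$, $\operatorname{epi} f=\{(x,\lambda):f(x)\le\lambda\}$; $f$ is nearly convex if $\operatorname{epi} f$ is nearly convex and proper if $\operatorname{dom} f\neq\emptyset$ and $f>-\infty$ everywhere. For $F:\mathbb{R}^n\rightrightarrows\mathbb{R}^p$, $\operatorname{gph} F=\{(x,y):y\in F(x)\}$, and $F$ is nearly convex if $\operatorname{gph}F$ is nearly convex. *)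

(* R^k is modelled as row vectors 'rV[R]_k
   over an arbitrary R : realType; R^n x R^p is identified with 'rV[R]_(n + p)
   via row_mx / lsubmx / rsubmx. *)
From HB Require Import structures.
From mathcomp Require Import all_boot all_order all_algebra.
From mathcomp Require Import all_classical all_reals ereal topology normedtype.
Set Implicit Arguments. Unset Strict Implicit. Unset Printing Implicit Defensive.
Import Order.TTheory GRing.Theory Num.Theory.
Import numFieldNormedType.Exports.
Local Open Scope classical_set_scope.
Local Open Scope ring_scope.

Section Defs.
Variable R : realType.

Definition convex_set_rV k (C : set 'rV[R]_k) : Prop :=
  forall a b (t : R), C a -> C b -> 0 <= t -> t <= 1 ->
    C (t *: a + (1 - t) *: b).

Definition nearly_convex_set k (O : set 'rV[R]_k) : Prop :=
  exists C : set 'rV[R]_k, convex_set_rV C /\ C `<=` O /\ O `<=` closure C.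

Definition aff k (O : set 'rV[R]_k) : set 'rV[R]_k :=
  [set x | exists (m : nat) (pt : 'I_m -> 'rV[R]_k) (c : 'I_m -> R),
     (forall i, O (pt i)) /\ \sum_(i < m) c i = 1 /\
     x = \sum_(i < m) c i *: pt i].

Definition eball k (a : 'rV[R]_k) (d : R) : set 'rV[R]_k :=
  [set x | \sum_(i < k) (x 0 i - a 0 i) ^+ 2 < d ^+ 2].

Definition ri k (O : set 'rV[R]_k) : set 'rV[R]_k :=
  [set a | O a /\ exists d : R, 0 < d /\ eball a d `&` aff O `<=` O].

Definition dom k (f : 'rV[R]_k -> \bar R) : set 'rV[R]_k :=
  [set x | (f x < +oo)%E].

(* epigraph in R^k x R = 'rV_(k + 1): v = row_mx x (lambda) *)
Definition epi k (f : 'rV[R]_k -> \bar R) : set 'rV[R]_(k + 1) :=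
  [set v | (f (lsubmx v) <= ((rsubmx v) 0 0)%:E)%E].

Definition nearly_convex_fun k (f : 'rV[R]_k -> \bar R) : Prop :=
  nearly_convex_set (epi f).

Definition proper_fun k (f : 'rV[R]_k -> \bar R) : Prop :=
  dom f !=set0 /\ (forall x, (-oo < f x)%E).

Definition gph n p (F : 'rV[R]_n -> set 'rV[R]_p) : set 'rV[R]_(n + p) :=
  [set v | F (lsubmx v) (rsubmx v)].

Definition nearly_convex_map n p (F : 'rV[R]_n -> set 'rV[R]_p) : Prop :=
  nearly_convex_set (gph F).

Definition optval n p (f : 'rV[R]_(n + p) -> \bar R)
  (F : 'rV[R]_n -> set 'rV[R]_p) (x : 'rV[R]_n) : \bar R :=
  ereal_inf [set f (row_mx x y) | y in F x].

End Defs.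

From HB Require Import structures.
From mathcomp Require Import all_boot all_order all_algebra.
From mathcomp Require Import all_classical all_reals ereal topology normedtype.
From mathcomp Require Import ring lra.
Set Implicit Arguments. Unset Strict Implicit. Unset Printing Implicit Defensive.
Import Order.TTheory GRing.Theory Num.Theory.
Import numFieldNormedType.Exports.
Local Open Scope classical_set_scope.
Local Open Scope ring_scope.

(* Let Ce, Cg be convex with Ce <= epi f <= cl Ce and Cg <= gph F <= cl Cg, and
   let E be the upward closure of Ce.  The witness for epi mu is the convex set
   T = {(x, lam) | exists y, (x, y, lam) in E and (x, y) in Cg}, which lies in
   epi mu.  To see epi mu <= cl T we use the line segment principle at a point
   z0 of ri (dom f) /\ ri (gph F): both Cg and the section of E at some height M
   contain relative neighbourhoods of z0.  Hence for (x, y) in gph F with f(x, y)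
   close to mu(x), the point (1 - t)(x, y) + t z0 lies in Cg and carries a value
   of E close to (1 - t) f(x, y) + t M; letting t go to 0 approximates (x, mu(x)). *)

Section RowVectors.
Variable R : realType.

Definition close_sup {k} (e : R) (x y : 'rV[R]_k) := forall j, `|x 0 j - y 0 j| < e.

Lemma close0 k e (u : 'rV[R]_k) : close_sup e u 0 <-> forall j, `|u 0 j| < e.
Proof. by split=> h j; have := h j; rewrite mxE subr0. Qed.

Lemma close_subr k e (x y : 'rV[R]_k) : close_sup e x y <-> close_sup e (x - y) 0.
Proof. by split=> h j; have := h j; rewrite !mxE subr0. Qed.

Lemma closure_rowP k (A : set 'rV[R]_k) x :
  closure A x <-> forall e, 0 < e -> exists2 y, A y & close_sup e x y.
Proof.
split=> [clx e e0|H B /nbhs_ballP [e /= e0 sB]].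
  have [y [Ay [_ xy]]] := clx _ (@nbhsx_ballx _ _ x e e0).
  by exists y => // j; exact: xy.
have [y Ay xy] := H e e0.
by exists y; split => //; apply: sB; split => // i j; rewrite (ord1 i); exact: xy.
Qed.

Lemma close_lsubmx n1 n2 e (v w : 'rV[R]_(n1 + n2)) :
  close_sup e v w -> close_sup e (lsubmx v) (lsubmx w).
Proof. by move=> vw j; rewrite !mxE. Qed.

Lemma close_rsubmx n1 n2 e (v w : 'rV[R]_(n1 + n2)) :
  close_sup e v w -> close_sup e (rsubmx v) (rsubmx w).
Proof. by move=> vw j; rewrite !mxE. Qed.

Lemma close_hsubmx n1 n2 e (v w : 'rV[R]_(n1 + n2)) :
  close_sup e (lsubmx v) (lsubmx w) -> close_sup e (rsubmx v) (rsubmx w) ->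
  close_sup e v w.
Proof.
move=> hl hr j; rewrite -(splitK j); case: (fintype.split j) => j' /=.
  by have := hl j'; rewrite !mxE.
by have := hr j'; rewrite !mxE.
Qed.

Lemma comb_translate k t (a x y : 'rV[R]_k) :
  t *: (a + x) + (1 - t) *: (a + y) = a + (t *: x + (1 - t) *: y).
Proof. by rewrite !scalerDr addrACA -scalerDl [t + _]addrC subrK scale1r. Qed.

Lemma mx11E (c : R) : (c%:M : 'M[R]_1) 0 0 = c.
Proof. by rewrite mxE eqxx mulr1n. Qed.

Lemma comb_entry m1 m2 (A B : 'M[R]_(m1, m2)) (a b : R) i j :
  (a *: A + b *: B) i j = a * A i j + b * B i j.
Proof. by rewrite !mxE. Qed.

Lemma row_mx_comb m n1 n2 (A1 A2 : 'M[R]_(m, n1)) (B1 B2 : 'M[R]_(m, n2))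
    (a b : R) :
  row_mx (a *: A1 + b *: A2) (a *: B1 + b *: B2) =
  a *: row_mx A1 B1 + b *: row_mx A2 B2.
Proof. by rewrite !scale_row_mx add_row_mx. Qed.

Lemma convex_combination k m (K : set 'rV[R]_k) (w : 'I_m -> R)
    (c : 'I_m -> 'rV[R]_k) :
  convex_set_rV K -> (forall i, 0 <= w i) -> \sum_i w i = 1 ->
  (forall i, K (c i)) -> K (\sum_i w i *: c i).
Proof.
move=> cK; elim: m w c => [|m IH] w c w0 w1 Kc.
  by move: w1; rewrite big_ord0 => /eqP; rewrite eq_sym oner_eq0.
rewrite big_ord_recr /=; move: w1; rewrite big_ord_recr /= => w1.
set W := \sum_(i < m) w (widen_ord (leqnSn m) i) in w1 *.
have W0 : 0 <= W by apply: sumr_ge0 => i _.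
have [/eqP WE|Wn0] := boolP (W == 0).
  have wz (i : 'I_m) : w (widen_ord (leqnSn m) i) = 0.
    by apply: (psumr_eq0P _ WE) => // j _.
  rewrite big1 ?add0r; last by move=> i _; rewrite wz scale0r.
  by move: w1; rewrite WE add0r => ->; rewrite scale1r.
have -> : \sum_(i < m) w (widen_ord (leqnSn m) i) *: c (widen_ord (leqnSn m) i)
   = W *: \sum_(i < m) (w (widen_ord (leqnSn m) i) / W) *: c (widen_ord (leqnSn m) i).
  by rewrite scaler_sumr; apply: eq_bigr => i _; rewrite scalerA mulrC divfK.
have -> : w ord_max = 1 - W by rewrite -w1 addrAC subrr add0r.
apply: cK => //; last by rewrite -w1 lerDl.
by apply: IH => // [i|]; [exact: divr_ge0 | rewrite -mulr_suml mulfV].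
Qed.

Lemma convex_preimage_affine k m (G : set 'rV[R]_k) (a : 'rV[R]_k)
    (V : 'M[R]_(m, k)) :
  convex_set_rV G -> convex_set_rV [set b : 'rV[R]_m | G (a + b *m V)].
Proof.
move=> cG b1 b2 t G1 G2 t0 t1.
by rewrite /= mulmxDl -!scalemxAl -comb_translate; exact: cG.
Qed.

End RowVectors.

Section NearIdentity.
Variable R : realType.

Lemma mulmx_entry_bound k m (P : 'M[R]_(k, m)) :
  exists2 K : R, 0 < K & forall (x : 'rV[R]_k) (e : R), 0 <= e ->
    (forall j, `|x 0 j| <= e) -> forall i, `|(x *m P) 0 i| <= K * e.
Proof.
exists (1 + \sum_j \sum_i `|P j i|).
  have : 0 <= \sum_j \sum_i `|P j i| by apply: sumr_ge0 => j _; apply: sumr_ge0.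
  lra.
move=> x e e0 xe i; rewrite mxE.
apply: (le_trans (ler_norm_sum _ _ _)).
apply: (@le_trans _ _ (\sum_j e * \sum_i `|P j i|)).
  apply: ler_sum => j _; rewrite normrM; apply: ler_pM => //.
  by rewrite (bigD1 i) //= lerDl; apply: sumr_ge0.
rewrite -mulr_sumr mulrC; apply: ler_wpM2r => //.
by rewrite lerDr.
Qed.

Lemma near_identity_bound m (D : 'M[R]_m) (d : R) :
  0 <= d -> m%:R * d <= 1/2 -> (forall i j, `|D i j| <= d) ->
  forall (x : 'rV[R]_m) (B : R), (forall j, `|(x *m (1%:M + D)) 0 j| <= B) ->
  forall j, `|x 0 j| <= 2 * B.
Proof.
move=> d0 md Dd x B xB j.
have [js _ Hmax] := @arg_maxP _ _ _ j xpredT (fun i => `|x 0 i|) isT.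
apply: le_trans (Hmax j isT) _.
have E : x 0 js = (x *m (1%:M + D)) 0 js - (x *m D) 0 js.
  by rewrite mulmxDr mulmx1 mxE [in RHS]mxE addrK.
have xD : `|(x *m D) 0 js| <= m%:R * d * `|x 0 js|.
  rewrite mxE; apply: (le_trans (ler_norm_sum _ _ _)).
  apply: (@le_trans _ _ (\sum_(i < m) `|x 0 js| * d)).
    by apply: ler_sum => i _; rewrite normrM; apply: ler_pM => //; exact: Hmax.
  by rewrite sumr_const card_ord -[X in X <= _]mulr_natl mulrA mulrAC.
have tri : `|x 0 js| <= `|(x *m (1%:M + D)) 0 js| + `|(x *m D) 0 js|.
  by rewrite {1}E; apply: ler_normB.
have half : m%:R * d * `|x 0 js| <= 1/2 * `|x 0 js| by apply: ler_wpM2r.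
have := xB js; move: xD tri half.
set a := `|(x *m (1%:M + D)) 0 js|; set b := `|(x *m D) 0 js|.
set X := `|x 0 js|; set Y := m%:R * d * X.
lra.
Qed.

Lemma near_identity_unit m (D : 'M[R]_m) (d : R) :
  0 <= d -> m%:R * d <= 1/2 -> (forall i j, `|D i j| <= d) ->
  1%:M + D \in unitmx.
Proof.
move=> d0 md Dd; rewrite -row_free_unit; apply: inj_row_free => v v0.
apply/rowP => j; rewrite mxE; apply/eqP; rewrite -normr_le0.
have := near_identity_bound d0 md Dd (x := v) (B := 0); rewrite mulr0; apply => j'.
by rewrite v0 mxE normr0.
Qed.

End NearIdentity.

Section Cross.
Variable R : realType.

(* Averaging the segments [qm i, qp i] with weights shifted by s/(2r) stays in K,
   provided |s_i| <= r; the resulting point is written in matrix form. *)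
Lemma cross_hull m (K : set 'rV[R]_m) (qp qm : 'I_m -> 'rV[R]_m) (r : R)
    (s : 'rV[R]_m) :
  (0 < m)%N -> convex_set_rV K -> 0 < r ->
  (forall i, K (qp i)) -> (forall i, K (qm i)) -> (forall i, `|s 0 i| <= r) ->
  K ((2 * m%:R)^-1 *: \sum_i (qp i + qm i) +
     m%:R^-1 *: (s *m ((2 * r)^-1 *: \matrix_i (qp i - qm i)))).
Proof.
move=> m0 cK r0 Kp Km sr.
pose a i := 2^-1 + (2 * r)^-1 * s 0 i.
have a01 i : 0 <= a i /\ a i <= 1.
  have u0 : 0 <= (2 * r)^-1 by rewrite invr_ge0 mulr_ge0 // ltW.
  have ur : (2 * r)^-1 * r = 2^-1 by field; rewrite gt_eqF.
  have := sr i; rewrite ler_norml => /andP[lo hi].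
  have := ler_wpM2l u0 lo; have := ler_wpM2l u0 hi.
  by rewrite mulrN ur /a; split; lra.
have mn0 : m%:R != 0 :> R by rewrite pnatr_eq0 -lt0n.
have -> : (2 * m%:R)^-1 *: \sum_i (qp i + qm i) +
    m%:R^-1 *: (s *m ((2 * r)^-1 *: \matrix_i (qp i - qm i))) =
    \sum_i m%:R^-1 *: (a i *: qp i + (1 - a i) *: qm i).
  rewrite mulmx_sum_row !scaler_sumr -big_split; apply: eq_bigr => i _ /=.
  apply/rowP => j; rewrite !mxE /a.
  by field; rewrite mn0 gt_eqF.
apply: (convex_combination cK) => [i||i].
- by rewrite invr_ge0 ler0n.
- by rewrite sumr_const card_ord -[X in X = _]mulr_natl mulfV.
- by have [a0 a1] := a01 i; apply: cK.
Qed.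

Lemma cross_near_id m (qp qm : 'I_m -> 'rV[R]_m) (r eta : R) : 0 < r ->
  (forall i, close_sup eta (qp i) (r *: row i 1%:M)) ->
  (forall i, close_sup eta (qm i) (- r *: row i 1%:M)) ->
  forall i j, `|((2 * r)^-1 *: \matrix_i (qp i - qm i) - 1%:M) i j| <= eta / r.
Proof.
move=> r0 Hp Hm i j; have := Hp i j; have := Hm i j; rewrite !mxE.
set A := qp i 0 j; set B := qm i 0 j; set d := (i == j)%:R => hB hA.
have u0 : 0 < (2 * r)^-1 by rewrite invr_gt0 mulr_gt0.
have -> : (2 * r)^-1 * (A - B) - d = (2 * r)^-1 * ((A - r * d) - (B - - r * d)).
  by field; rewrite gt_eqF.
have -> : eta / r = (2 * r)^-1 * (2 * eta) by field; rewrite gt_eqF.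
rewrite normrM gtr0_norm //; apply: ler_wpM2l; first exact: ltW.
have := ler_normB (A - r * d) (B - - r * d); lra.
Qed.

Lemma cross_center_small m (qp qm : 'I_m -> 'rV[R]_m) (r eta : R) :
  (0 < m)%N ->
  (forall i, close_sup eta (qp i) (r *: row i 1%:M)) ->
  (forall i, close_sup eta (qm i) (- r *: row i 1%:M)) ->
  forall j, `|((2 * m%:R)^-1 *: \sum_i (qp i + qm i)) 0 j| <= eta.
Proof.
move=> m0 Hp Hm j.
have u0 : 0 < (2 * m%:R)^-1 :> R by rewrite invr_gt0 mulr_gt0 // ltr0n.
rewrite mxE summxE normrM gtr0_norm //.
have : `|\sum_i (qp i + qm i) 0 j| <= \sum_(i < m) 2 * eta.
  apply: (le_trans (ler_norm_sum _ _ _)); apply: ler_sum => i _.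
  have := Hp i j; have := Hm i j; rewrite !mxE.
  set A := qp i 0 j; set B := qm i 0 j; set d := (i == j)%:R => hB hA.
  have -> : A + B = (A - r * d) + (B - - r * d) by ring.
  have := ler_normD (A - r * d) (B - - r * d); lra.
rewrite sumr_const card_ord -[_ *+ m]mulr_natl => h.
apply: le_trans (ler_wpM2l (ltW u0) h) _.
have -> : (2 * m%:R)^-1 * (m%:R * (2 * eta)) = eta.
  by field; rewrite pnatr_eq0 -lt0n.
by [].
Qed.

(* A convex set of R^m that comes arbitrarily close to the 2m points +-r e_i
   contains a neighbourhood of 0: every small b is a convex combination of
   approximate cross points, by inverting the near-identity matrix above. *)
Lemma cross m (K : set 'rV[R]_m) (r : R) :
  convex_set_rV K -> 0 < r -> K !=set0 ->
  (forall i eta, 0 < eta -> exists q, K q /\ close_sup eta q (r *: row i 1%:M)) ->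
  (forall i eta, 0 < eta -> exists q, K q /\ close_sup eta q (- r *: row i 1%:M)) ->
  exists2 rho, 0 < rho & forall b, close_sup rho b 0 -> K b.
Proof.
move=> cK r0 [q0 Kq0] Hp Hm.
case: m K cK q0 Kq0 Hp Hm => [|m] K cK q0 Kq0 Hp Hm.
  by exists 1 => // b _; rewrite (thinmx0 b) -(thinmx0 q0).
have mpos : 0 < m.+1%:R :> R by rewrite ltr0n.
pose eta := r / (8 * m.+1%:R).
have eta0 : 0 < eta by rewrite divr_gt0 // mulr_gt0.
have [qp Hqp] := choice (fun i => Hp i eta eta0).
have [qm Hqm] := choice (fun i => Hm i eta eta0).
pose D := (2 * r)^-1 *: \matrix_i (qp i - qm i).
pose h := (2 * m.+1%:R)^-1 *: \sum_i (qp i + qm i).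
have Dnear := cross_near_id r0 (fun i => (Hqp i).2) (fun i => (Hqm i).2).
have hsmall : forall j, `|h 0 j| <= eta :=
  cross_center_small (ltn0Sn m) (fun i => (Hqp i).2) (fun i => (Hqm i).2).
have d0 : 0 <= eta / r by rewrite divr_ge0 // ltW.
have md : m.+1%:R * (eta / r) <= 1/2.
  have -> : m.+1%:R * (eta / r) = 1/8 by rewrite /eta; field; rewrite !gt_eqF.
  lra.
have DE : 1%:M + (D - 1%:M) = D by rewrite addrC subrK.
have Dunit : D \in unitmx by rewrite -DE; exact: near_identity_unit md Dnear.
exists eta => // b /close0 bsmall.
pose s := (m.+1%:R *: (b - h)) *m invmx D.
have sD : s *m D = m.+1%:R *: (b - h) by rewrite mulmxKV.
have sr i : `|s 0 i| <= r.
  have := near_identity_bound d0 md Dnear (x := s) (B := r / 4); rewrite DE sD.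
  move=> /(_ _ i) si; suff /si : forall j, `|(m.+1%:R *: (b - h)) 0 j| <= r / 4 by lra.
  move=> j; have -> : (m.+1%:R *: (b - h)) 0 j = m.+1%:R * (b 0 j - h 0 j).
    by rewrite !mxE.
  have -> : r / 4 = m.+1%:R * (2 * eta) by rewrite /eta; field; rewrite !gt_eqF.
  rewrite normrM ger0_norm ?ler0n //; apply: ler_wpM2l; first exact: ltW.
  have := hsmall j; have := bsmall j; have := ler_normB (b 0 j) (h 0 j); lra.
have := cross_hull (ltn0Sn m) cK r0 (fun i => (Hqp i).1) (fun i => (Hqm i).1) sr.
by rewrite -/D -/h sD scalerA mulVf ?gt_eqF // scale1r addrC subrK.
Qed.

End Cross.

Section RelativeCore.
Variable R : realType.

Lemma coords_closure k m (G : set 'rV[R]_k) a (V : 'M[R]_(m, k)) y eta :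
  row_free V -> (forall g, G g -> (g - a <= V)%MS) -> closure G y -> 0 < eta ->
  exists q, G (a + q *m V) /\ close_sup eta q ((y - a) *m pinvmx V).
Proof.
move=> fV GV cly eta0.
have [C C0 HC] := mulmx_entry_bound (pinvmx V).
have e0 : 0 < eta / (2 * C) by rewrite divr_gt0 // mulr_gt0.
have [g Gg yg] := (closure_rowP _ _).1 cly _ e0.
exists ((g - a) *m pinvmx V); split; first by rewrite mulmxKpV ?GV // addrC subrK.
apply/close_subr/close0 => j; rewrite -mulmxBl opprB addrA subrK.
apply: le_lt_trans (HC _ _ (ltW e0) _ j) _ => [j'|].
  by rewrite !mxE distrC; exact: ltW.
rewrite (_ : C * (eta / (2 * C)) = eta / 2); last by field; rewrite gt_eqF.
lra.
Qed.

Definition rel_core k m (G : set 'rV[R]_k) (a : 'rV[R]_k) (V : 'M[R]_(m, k))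
    (rho : R) :=
  forall u, (u <= V)%MS -> close_sup rho u 0 -> G (a + u).

Lemma rel_core_closure k m (G : set 'rV[R]_k) a (V : 'M[R]_(m, k)) (r : R) :
  row_free V -> convex_set_rV G -> 0 < r -> (forall g, G g -> (g - a <= V)%MS) ->
  closure G a -> (forall i, closure G (a + r *: row i V)) ->
  (forall i, closure G (a - r *: row i V)) ->
  exists2 rho, 0 < rho & rel_core G a V rho.
Proof.
move=> fV cG r0 GV cla clp clm.
have coord_row i s : (a + s *: row i V - a) *m pinvmx V = s *: row i 1%:M.
  by rewrite addrAC subrr add0r -scalemxAl -row_mul mulmxVp.
have [rho0 rho00 HK] : exists2 rho0, 0 < rho0 &
    forall b, close_sup rho0 b 0 -> G (a + b *m V).
  apply: (cross (convex_preimage_affine (a := a) (V := V) cG) r0).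
  - by have [q [Gq _]] := coords_closure fV GV cla ltr01; exists q.
  - by move=> i eta eta0; rewrite -coord_row; exact: coords_closure.
  - move=> i eta eta0; rewrite -coord_row; apply: coords_closure => //.
    by rewrite scaleNr.
have [C C0 HC] := mulmx_entry_bound (pinvmx V).
have rho0C : 0 < rho0 / (2 * C) by rewrite divr_gt0 // mulr_gt0.
exists (rho0 / (2 * C)) => // u uV /close0 usmall.
rewrite -(mulmxKpV uV); apply/HK/close0 => j.
apply: le_lt_trans (HC _ _ (ltW rho0C) _ j) _ => [j'|]; first exact: ltW.
rewrite (_ : C * (rho0 / (2 * C)) = rho0 / 2); last by field; rewrite gt_eqF.
lra.
Qed.

Lemma free_spanning_rows k (L : set 'rV[R]_k) :
  exists m (V : 'M[R]_(m, k)),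
    [/\ row_free V, forall i, L (row i V) & forall u, L u -> (u <= V)%MS].
Proof.
pose P n := `[< exists V : 'M[R]_(n, k), row_free V /\ forall i, L (row i V) >].
have ub n : P n -> (n <= k)%N.
  by move=> /asboolP [V [fV _]]; rewrite -(eqP fV) rank_leq_col.
have P0 : exists n, P n.
  exists 0%N; apply/asboolP; exists 0; split; last by case.
  by rewrite /row_free -leqn0 rank_leq_row.
case: (ex_maxnP P0 ub) => n /asboolP [V [fV LV]] maxn.
exists n, V; split => // u Lu; apply/negPn/negP => Vu.
have /maxn : P (n + 1)%N; last by rewrite addn1 ltnn.
apply/asboolP; exists (col_mx V u); split.
  rewrite /row_free eqn_leq rank_leq_row /= -(addsmxE V u).1 addn1.
  have := mxrank_leqif_sup (addsmxSl V u).
  by move/ltn_leqif; rewrite addsmx_sub submx_refl (negbTE Vu) (eqP fV) => ->.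
move=> i; rewrite -(splitK i); case: (fintype.split i) => j /=.
  by rewrite rowKu.
by rewrite rowKd (ord1 j); have -> : row 0 u = u by apply/rowP => l; rewrite mxE.
Qed.

Lemma eball_close k (a x : 'rV[R]_k) (d : R) : 0 < d ->
  (forall j, `|x 0 j - a 0 j| <= d / k.+1%:R) -> eball a d x.
Proof.
move=> d0 H; rewrite /eball /=.
set e := d / k.+1%:R.
have e0 : 0 < e by rewrite divr_gt0 // ltr0n.
apply: (@le_lt_trans _ _ (\sum_(i < k) e ^+ 2)).
  apply: ler_sum => i _; have := H i; rewrite -/e ler_norml => /andP[lo hi].
  nra.
rewrite sumr_const card_ord -mulr_natl.
have -> : d = k.+1%:R * e by rewrite /e mulrC divfK // pnatr_eq0.
have k0 : (0 : R) <= k%:R by rewrite ler0n.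
rewrite -natr1; nra.
Qed.

Lemma aff_segment k (O : set 'rV[R]_k) a x (s : R) :
  O a -> O x -> aff O ((1 - s) *: a + s *: x).
Proof.
move=> Oa Ox; exists 2%N, (fun i : 'I_2 => if i == ord0 then a else x),
  (fun i : 'I_2 => if i == ord0 then 1 - s else s).
split; first by move=> i; case: ifP.
by rewrite !big_ord_recl !big_ord0 /= !addr0 subrK.
Qed.

Lemma ri_cross k (O : set 'rV[R]_k) a : ri O a ->
  exists m (V : 'M[R]_(m, k)) (r : R), [/\ 0 < r, row_free V,
    forall x, O x -> (x - a <= V)%MS,
    forall i, O (a + r *: row i V) & forall i, O (a - r *: row i V)].
Proof.
move=> [Oa [d [d0 ballO]]].
pose L := [set u : 'rV[R]_k | forall s : R, aff O (a + s *: u)].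
have [m [V [fV LV VL]]] := free_spanning_rows L.
pose S := 1 + \sum_i \sum_j `|V i j|.
have VS i j : `|V i j| <= S.
  rewrite /S (bigD1 i) //= (bigD1 j) //=.
  have : 0 <= \sum_(j0 | j0 != j) `|V i j0| by apply: sumr_ge0.
  have : 0 <= \sum_(i0 | i0 != i) \sum_j0 `|V i0 j0|.
    by apply: sumr_ge0 => i0 _; apply: sumr_ge0.
  lra.
have S0 : 0 < S.
  have : 0 <= \sum_i \sum_j `|V i j| by apply: sumr_ge0 => i _; apply: sumr_ge0.
  rewrite /S; lra.
pose r := d / (k.+1%:R * S).
have r0 : 0 < r by rewrite divr_gt0 // mulr_gt0 // ltr0n.
have Orow i s : `|s| <= r -> O (a + s *: row i V).
  move=> sr; apply: ballO; split; last exact: LV.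
  apply: eball_close => // j; rewrite !mxE addrAC subrr add0r normrM.
  apply: (@le_trans _ _ (r * S)); first by apply: ler_pM => //; exact: VS.
  have -> : r * S = d / k.+1%:R by rewrite /r; field; rewrite !gt_eqF ?ltr0n.
  by [].
exists m, V, r; split => // [x Ox|i|i].
- apply: VL => s; have -> : a + s *: (x - a) = (1 - s) *: a + s *: x.
    by rewrite scalerBr scalerBl scale1r addrA addrAC.
  exact: aff_segment.
- by apply: Orow; rewrite gtr0_norm.
- by rewrite -scaleNr; apply: Orow; rewrite normrN gtr0_norm.
Qed.

Lemma ri_rel_core k (O C : set 'rV[R]_k) a :
  convex_set_rV C -> C `<=` O -> O `<=` closure C -> ri O a ->
  exists m (V : 'M[R]_(m, k)) rho,
    [/\ 0 < rho, forall x, O x -> (x - a <= V)%MS & rel_core C a V rho].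
Proof.
move=> cC CO Ocl riOa.
have [m [V [r [r0 fV OV Op Om]]]] := ri_cross riOa.
have [rho rho0 core] := rel_core_closure fV cC r0 (fun g Cg => OV _ (CO _ Cg))
  (Ocl _ riOa.1) (fun i => Ocl _ (Op i)) (fun i => Ocl _ (Om i)).
by exists m, V, rho.
Qed.

End RelativeCore.

Section SegmentPrinciple.
Variable R : realType.

Lemma submx_diff k m (V : 'M[R]_(m, k)) (a z z' : 'rV[R]_k) (c : R) :
  (z - a <= V)%MS -> (z' - a <= V)%MS -> (c *: (z - z') <= V)%MS.
Proof.
move=> zV z'V; apply: scalemx_sub.
have -> : z - z' = (z - a) + (-1) *: (z' - a) by rewrite scaleN1r opprB addrA subrK.
by apply: addmx_sub => //; apply: scalemx_sub.
Qed.

Lemma core_shift k m (G : set 'rV[R]_k) a (V : 'M[R]_(m, k)) (rho t : R)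
    (z z' : 'rV[R]_k) :
  rel_core G a V rho -> 0 < t -> t <= 1 -> (z - a <= V)%MS ->
  (z' - a <= V)%MS -> close_sup (t * rho) z z' ->
  G (a + ((1 - t) / t) *: (z - z')).
Proof.
move=> core t0 t1 zV z'V zz'; apply: core; first exact: submx_diff zV z'V.
have c0 : 0 <= (1 - t) / t by rewrite divr_ge0 ?subr_ge0 // ltW.
apply/close0 => j; have := zz' j; rewrite !mxE normrM ger0_norm // => zj.
have trho : 0 < t * rho by apply: le_lt_trans zj.
apply: le_lt_trans (ler_wpM2l c0 (ltW zj)) _.
rewrite mulrA divfK ?gt_eqF //; lra.
Qed.

Lemma shift_comb k (t : R) (a z z' : 'rV[R]_k) : 0 < t ->
  t *: (a + ((1 - t) / t) *: (z - z')) + (1 - t) *: z' = t *: a + (1 - t) *: z.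
Proof. by move=> t0; apply/rowP => j; rewrite !mxE; field; rewrite gt_eqF. Qed.

Lemma segment_principle k m (G : set 'rV[R]_k) a (V : 'M[R]_(m, k)) (rho t : R) z :
  convex_set_rV G -> 0 < rho -> rel_core G a V rho ->
  (forall g, G g -> (g - a <= V)%MS) -> closure G z -> (z - a <= V)%MS ->
  0 < t -> t <= 1 -> G (t *: a + (1 - t) *: z).
Proof.
move=> cG rho0 core GV clz zV t0 t1.
have [z' Gz' zz'] := (closure_rowP _ _).1 clz _ (mulr_gt0 t0 rho0).
rewrite -(shift_comb a z z' t0); apply: cG => //; last exact: ltW.
exact: core_shift core t0 t1 zV (GV _ Gz') zz'.
Qed.

End SegmentPrinciple.

Section UpperHull.
Variables (R : realType) (k : nat).

Definition uphull (C : set 'rV[R]_(k + 1)) : set 'rV[R]_(k + 1) :=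
  [set w | exists2 w', C w' & lsubmx w' = lsubmx w /\ rsubmx w' 0 0 <= rsubmx w 0 0].

Definition level (E : set 'rV[R]_(k + 1)) (M : R) : set 'rV[R]_k :=
  [set z | E (row_mx z M%:M)].

Lemma sub_uphull C : C `<=` uphull C.
Proof. by move=> w Cw; exists w. Qed.

Lemma uphull_convex C : convex_set_rV C -> convex_set_rV (uphull C).
Proof.
move=> cC w1 w2 t [w1' C1 [l1 r1]] [w2' C2 [l2 r2]] t0 t1.
exists (t *: w1' + (1 - t) *: w2'); first exact: cC.
rewrite !linearD !linearZ /= l1 l2 !comb_entry; split => //.
by apply: lerD; apply: ler_wpM2l; rewrite ?subr_ge0.
Qed.

Lemma uphull_epi C (g : 'rV[R]_k -> \bar R) : C `<=` epi g -> uphull C `<=` epi g.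
Proof.
move=> Cg w [w' /Cg epiw' [lw rw]]; rewrite /epi /= -lw.
by apply: le_trans epiw' _; rewrite lee_fin.
Qed.

Lemma uphull_up C w (mu : R) : uphull C w -> rsubmx w 0 0 <= mu ->
  uphull C (row_mx (lsubmx w) mu%:M).
Proof.
move=> [w' Cw' [lw rw]] wmu; exists w' => //.
by rewrite row_mxKl row_mxKr mx11E lw (le_trans rw).
Qed.

Lemma level_convex E M : convex_set_rV E -> convex_set_rV (level E M).
Proof.
move=> cE z1 z2 t E1 E2 t0 t1; have := cE _ _ t E1 E2 t0 t1.
by rewrite /level /= !scale_row_mx add_row_mx -scalerDl [t + _]addrC subrK scale1r.
Qed.

Lemma level_dom E (g : 'rV[R]_k -> \bar R) M : E `<=` epi g -> level E M `<=` dom g.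
Proof.
move=> Eg z /Eg; rewrite /epi /dom /= row_mxKl row_mxKr mx11E => gz.
exact: le_lt_trans gz (ltry _).
Qed.

Lemma level_closure C (g : 'rV[R]_k -> \bar R) M z :
  epi g `<=` closure C -> (-oo < g z)%E -> (g z < M%:E)%E ->
  closure (level (uphull C) M) z.
Proof.
move=> gC gz_ninf gzM; apply/closure_rowP => e e0.
have gz_fin : g z \is a fin_num by rewrite fin_numElt gz_ninf (lt_trans gzM) ?ltry.
set c := fine (g z); have cM : c < M by rewrite -lte_fin fineK.
have eta0 : 0 < Num.min e (M - c) by rewrite lt_min e0 subr_gt0.
have epiz : epi g (row_mx z c%:M) by rewrite /epi /= row_mxKl row_mxKr mx11E fineK.
have [w Cw zw] := (closure_rowP _ _).1 (gC _ epiz) _ eta0.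
exists (lsubmx w).
  exists w => //; rewrite row_mxKl row_mxKr mx11E; split => //.
  have := close_rsubmx zw 0; rewrite row_mxKr mx11E lt_min => /andP[_ wM].
  have := ler_norm (rsubmx w 0 0 - c); rewrite distrC; lra.
by move=> j; have := close_lsubmx zw j; rewrite row_mxKl lt_min => /andP[].
Qed.

End UpperHull.

Section Bounds.
Variable R : realType.

Lemma ereal_fin_ub (I : finType) (u : I -> \bar R) :
  (forall i, (u i < +oo)%E) -> exists M : R, forall i, (u i < M%:E)%E.
Proof.
move=> uoo; exists (1 + \sum_i `|fine (u i)|) => i.
have S0 : 0 <= \sum_(j | j != i) `|fine (u j)| by apply: sumr_ge0.
have [->|uninf] := eqVneq (u i) -oo%E; first exact: ltNyr.
have ufin : u i \is a fin_num by rewrite fin_numE uninf (lt_eqF (uoo i)).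
have := fineK ufin; set c := fine (u i) => <-.
rewrite lte_fin (bigD1 i) //= -/c.
have := ler_norm c; lra.
Qed.

Lemma small_weight (D eps : R) : 0 <= D -> 0 < eps ->
  exists t, [/\ 0 < t, t <= 1 & t * D < eps].
Proof.
move=> D0 eps0; have De : 0 < D + eps by rewrite ltr_wpDl.
exists (eps / (D + eps)); split; first by rewrite divr_gt0.
  by rewrite ler_pdivrMr // mul1r lerDr.
rewrite mulrAC ltr_pdivrMr // ltr_pM2l //; lra.
Qed.

End Bounds.

Section OptimalValue.
Variables (R : realType) (n p : nat).
Variables (f : 'rV[R]_(n + p) -> \bar R) (F : 'rV[R]_n -> set 'rV[R]_p).

Definition proj_set (E : set 'rV[R]_(n + p + 1)) (G : set 'rV[R]_(n + p)) :
    set 'rV[R]_(n + 1) :=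
  [set v | exists y, E (row_mx (row_mx (lsubmx v) y) (rsubmx v)) /\
                     G (row_mx (lsubmx v) y)].

Lemma proj_set_convex E G :
  convex_set_rV E -> convex_set_rV G -> convex_set_rV (proj_set E G).
Proof.
move=> cE cG v1 v2 t [y1 [E1 G1]] [y2 [E2 G2]] t0 t1.
exists (t *: y1 + (1 - t) *: y2); rewrite !linearD !linearZ /= !row_mx_comb.
by split; [exact: cE | exact: cG].
Qed.

Lemma proj_set_epi E G : E `<=` epi f -> G `<=` gph F ->
  proj_set E G `<=` epi (optval f F).
Proof.
move=> Ef GF v [y [/Ef + /GF]]; rewrite /epi /gph /= !row_mxKl !row_mxKr => fv Fy.
by apply: le_trans _ fv; apply: ereal_inf_lbound; exists y.
Qed.

Variables (Ce : set 'rV[R]_(n + p + 1)) (Cg : set 'rV[R]_(n + p)).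
Hypothesis f_ninfty : forall z, (-oo < f z)%E.
Hypotheses (cCe : convex_set_rV Ce) (Ce_epi : Ce `<=` epi f)
  (epi_Ce : epi f `<=` closure Ce).
Hypotheses (cCg : convex_set_rV Cg) (Cg_gph : Cg `<=` gph F)
  (gph_Cg : gph F `<=` closure Cg).

Local Notation E := (uphull Ce).

Lemma level_core z0 : ri (dom f) z0 ->
  exists (M : R) m (V : 'M[R]_(m, n + p)) rho, [/\ 0 < rho,
    forall z, dom f z -> (z - z0 <= V)%MS & rel_core (level E M) z0 V rho].
Proof.
move=> riz0; have [m [V [r [r0 fV domV Dp Dm]]]] := ri_cross riz0.
pose pt (o : option ('I_m * bool)) :=
  if o is Some (i, b) then z0 + (if b then r else - r) *: row i V else z0.
have [|M HM] := ereal_fin_ub (u := fun o => f (pt o)).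
  by case=> [[i []]|] /=; [exact: Dp | by rewrite scaleNr; exact: Dm | exact: riz0.1].
have Ecl z : (f z < M%:E)%E -> closure (level E M) z.
  exact: level_closure epi_Ce (f_ninfty z).
have Ecl_minus i : closure (level E M) (z0 - r *: row i V).
  by have := Ecl _ (HM (Some (i, false))); rewrite /= scaleNr.
have [rho rho0 core] := rel_core_closure fV (level_convex (M := M) (uphull_convex cCe))
  r0 (fun g Eg => domV _ (level_dom (uphull_epi Ce_epi) Eg)) (Ecl _ (HM None))
  (fun i => Ecl _ (HM (Some (i, true)))) Ecl_minus.
by exists M, m, V, rho.
Qed.

Section Approximation.
Variables (z0 : 'rV[R]_(n + p)) (M : R) (mf mg : nat).
Variables (Vf : 'M[R]_(mf, n + p)) (Vg : 'M[R]_(mg, n + p)) (rhof rhog : R).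
Hypotheses (rhof0 : 0 < rhof) (rhog0 : 0 < rhog).
Hypothesis dom_Vf : forall z, dom f z -> (z - z0 <= Vf)%MS.
Hypothesis gph_Vg : forall z, gph F z -> (z - z0 <= Vg)%MS.
Hypothesis core_f : rel_core (level E M) z0 Vf rhof.
Hypothesis core_g : rel_core Cg z0 Vg rhog.

Lemma segment_point z c t (delta : R) :
  gph F z -> f z = c%:E -> 0 < t -> t <= 1 -> 0 < delta ->
  exists2 lam, lam <= t * M + (1 - t) * c + delta &
    E (row_mx (t *: z0 + (1 - t) *: z) lam%:M) /\ Cg (t *: z0 + (1 - t) *: z).
Proof.
move=> Fz fz t0 t1 delta0.
have dz : dom f z by rewrite /dom /= fz ltry.
have eta0 : 0 < Num.min (t * rhof) delta by rewrite lt_min mulr_gt0 ?delta0.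
have epiz : epi f (row_mx z c%:M) by rewrite /epi /= row_mxKl row_mxKr mx11E fz.
have [w Cw zw] := (closure_rowP _ _).1 (epi_Ce epiz) _ eta0.
have dw : dom f (lsubmx w) by rewrite /dom /=; exact: le_lt_trans (Ce_epi Cw) (ltry _).
have zw_l : close_sup (t * rhof) z (lsubmx w).
  by move=> j; have := close_lsubmx zw j; rewrite row_mxKl lt_min => /andP[].
have zw_r : rsubmx w 0 0 < c + delta.
  have := close_rsubmx zw 0; rewrite row_mxKr mx11E lt_min => /andP[_].
  have := ler_norm (rsubmx w 0 0 - c); rewrite distrC; lra.
have Eg2 := core_shift core_f t0 t1 (dom_Vf dz) (dom_Vf dw) zw_l.
have := uphull_convex cCe Eg2 (sub_uphull Cw) (ltW t0) t1.
set wt := _ + _ => Ewt.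
have lwt : lsubmx wt = t *: z0 + (1 - t) *: z.
  by rewrite linearD !linearZ /= row_mxKl shift_comb.
have rwt : rsubmx wt 0 0 = t * M + (1 - t) * rsubmx w 0 0.
  by rewrite linearD !linearZ /= row_mxKr comb_entry mx11E.
exists (rsubmx wt 0 0).
  have : (1 - t) * rsubmx w 0 0 <= (1 - t) * c + (1 - t) * delta.
    by rewrite -mulrDr; apply: ler_wpM2l; [rewrite subr_ge0 | exact: ltW].
  have : (1 - t) * delta <= delta by apply: ler_piMl; [exact: ltW | lra].
  rewrite rwt; lra.
split; first by rewrite -lwt -mx11_scalar hsubmxK.
exact: segment_principle cCg rhog0 core_g (fun g Gg => gph_Vg (Cg_gph Gg))
  (gph_Cg Fz) (gph_Vg Fz) t0 t1.
Qed.

Lemma epi_optval_closure : epi (optval f F) `<=` closure (proj_set E Cg).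
Proof.
move=> v fv; apply/closure_rowP => e e0.
set x := lsubmx v; set lam := rsubmx v 0 0.
have eps0 : 0 < e / 4 by rewrite divr_gt0.
have optval_lt : (optval f F x < (lam + e / 4)%:E)%E.
  by apply: le_lt_trans fv _; rewrite lte_fin ltrDl.
have [_ [y Fy <-] fy] := ereal_inf_lt optval_lt.
set z := row_mx x y; have Fz : gph F z by rewrite /gph /= row_mxKl row_mxKr.
have fz : f z = (fine (f z))%:E.
  by rewrite fineK // fin_numElt f_ninfty (lt_trans fy) ?ltry.
set c := fine (f z) in fz; have c_lt : c < lam + e / 4 by rewrite -lte_fin -fz.
pose D := `|M - c| + \sum_j `|lsubmx z0 0 j - x 0 j|.
have D0 : 0 <= D by rewrite addr_ge0 ?sumr_ge0.
have Dj j : `|lsubmx z0 0 j - x 0 j| <= D.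
  by rewrite /D (bigD1 j) //= addrCA lerDl addr_ge0 ?sumr_ge0.
have [t [t0 t1 tD]] := small_weight D0 eps0.
have [mu mu_le [Ezt Czt]] := segment_point Fz fz t0 t1 eps0.
set zt := t *: z0 + (1 - t) *: z in Ezt Czt.
exists (row_mx (lsubmx zt) (Num.max lam mu)%:M).
  exists (rsubmx zt); rewrite row_mxKl row_mxKr hsubmxK; split => //.
  have := uphull_up (mu := Num.max lam mu) Ezt.
  by rewrite row_mxKl row_mxKr mx11E le_max lexx orbT; apply.
apply: close_hsubmx => j; rewrite ?row_mxKl ?row_mxKr.
  rewrite /zt linearD !linearZ /= row_mxKl comb_entry.
  have -> : x 0 j - (t * lsubmx z0 0 j + (1 - t) * x 0 j) =
    - (t * (lsubmx z0 0 j - x 0 j)) by ring.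
  rewrite normrN normrM gtr0_norm //.
  have := ler_wpM2l (ltW t0) (Dj j); lra.
rewrite (ord1 j) mx11E -/lam.
have : t * (M - c) <= t * D.
  apply: ler_wpM2l; first exact: ltW.
  by apply: le_trans (ler_norm _) _; rewrite lerDl sumr_ge0.
case: (lerP mu lam) => [_ | lammu]; first by rewrite subrr normr0.
rewrite distrC ger0_norm; first lra.
by rewrite subr_ge0; exact: ltW.
Qed.

End Approximation.

End OptimalValue.

Theorem theorem5p2 (R : realType) (n p : nat)
  (f : 'rV[R]_(n + p) -> \bar R) (F : 'rV[R]_n -> set 'rV[R]_p) :
  proper_fun f -> nearly_convex_fun f -> nearly_convex_map F ->
  ri (dom f) `&` ri (gph F) !=set0 ->
  nearly_convex_fun (optval f F).
Proof.
move=> [_ f_ninfty] [Ce [cCe [Ce_epi epi_Ce]]] [Cg [cCg [Cg_gph gph_Cg]]].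
move=> [z0 [ri_dom ri_gph]].
have [mg [Vg [rhog [rhog0 gph_Vg core_g]]]] := ri_rel_core cCg Cg_gph gph_Cg ri_gph.
have [M [mf [Vf [rhof [rhof0 dom_Vf core_f]]]]] :=
  level_core f_ninfty cCe Ce_epi epi_Ce ri_dom.
exists (proj_set (uphull Ce) Cg); split.
  exact: proj_set_convex (uphull_convex cCe) cCg.
split; first exact: proj_set_epi (uphull_epi Ce_epi) Cg_gph.
exact: (epi_optval_closure f_ninfty cCe Ce_epi epi_Ce cCg Cg_gph gph_Cg
  rhof0 rhog0 dom_Vf gph_Vg core_f core_g).
Qed.
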